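(* Let $\mathbf r(x,y)$ be a membrane O surface of the 2nd kind with load $q_n\neq0$, represented in curvature line coordinates as $A_1 = \cos\alpha + h\sin\alpha$, $A_2 = \sin\alpha - h\cos\alpha$, $H_\circ = e^\xi\sin\alpha$, $K_\circ = -e^\xi\cos\alpha$, with $\overline A_1,\overline A_2$ determined by $2\overline A_1H_\circ - q_nA_1^2 = -q_n$, $2\overline A_2K_\circ - q_nA_2^2 = -q_n$, where $(h,\alpha,\xi)$ satisfy the system $$h_x = (h+\cot\alpha)\xi_x,\ \ h_y = (h-\tan\alpha)\xi_y,\ \ \xi_{xy} = \xi_x\xi_y + (\log\sin\alpha)_y\xi_x + (\log\cos\alpha)_x\xi_y,$$ $$(-\alpha_x+\xi_x\cot\alpha)_x + (\alpha_y+\xi_y\tan\alpha)_y + e^{2\xi}\sin\alpha\cos\alpha = 0. \quad (\ast\ast)$$ Let $m\neq0$ be a real constant and $(\lambda,\mu,\omega,\varphi,\chi)$ a solution of the linear system in the context satisfying the constraint $\lambda^2+\mu^2+\omega^2 = 2m\omega\nu$ with $\nu = \chi - \frac{q_n\varphi^2}{2\omega}$, and let $\mathbf r'$, $A_1',A_2',H_\circ',K_\circ'$ be as defined in the context. Put $t = h - \frac{\varphi}{\omega}e^{\xi}$ and define $\xi',\alpha',h'$ by $$e^{\xi'} = \frac{q_n}{2}\frac{\omega}{\nu}e^{-\xi}(1+t^2),\qquad e^{i\alpha'} = e^{i\alpha}\frac{1-it}{1+it},\qquad h' = -t + \frac{\varphi}{\omega}e^{\xi'}.$$ Then $$A_1'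 = \cos\alpha' + h'\sin\alpha',\quad A_2' = \sin\alpha' - h'\cos\alpha',\quad H_\circ' = e^{\xi'}\sin\alpha',\quad K_\circ' = -e^{\xi'}\cos\alpha'.$$ Consequently $(\xi',\alpha',h')$ again satisfies the system $(\ast\ast)$, i.e. the Bäcklund transformation preserves membrane O surfaces of the 2nd kind.
   Context: Setting: $\mathbf r(x,y)$ is a surface in $\mathbb R^3$ in curvature line coordinates with $\mathbf r_x = A_1\mathbf X$, $\mathbf r_y = A_2\mathbf Y$, $\mathbf X,\mathbf Y$ orthonormal, $\mathbf N = \mathbf X\times\mathbf Y$, $\mathbf N_x = H_\circ\mathbf X$, $\mathbf N_y = K_\circ\mathbf Y$ ($H_\circ = -\kappa_1A_1$, $K_\circ=-\kappa_2A_2$ with principal curvatures $\kappa_1,\kappa_2$), so $\mathrm I = A_1^2dx^2 + A_2^2dy^2$, $\mathrm{III} = H_\circ^2dx^2+K_\circ^2dy^2$; $p = (A_1)_y/A_2$, $q=(A_2)_x/A_1$. It is the middle surface of a shell membrane under constant purely normal load $q_n\neq 0$ whose principal stress lines coincide with curvature lines, with stress resultants $T_1,T_2$ satisfying $(T_1)_x + (\log A_1)_x(T_1-T_2)=0$, $(T_2)_y+(\log A_2)_y(T_2-T_1)=0$, $\kappa_1T_1+\kappa_2T_2+q_n=0$ (a membrane O surface); $\overline A_1 = T_2A_1$, $\overline A_2 = T_1A_2$. It is of the 2nd kind when $2\overline A_1H_\circ - q_nA_1^2 = -q_n$ and $2\overline A_2K_\circ - q_nA_2^2 = -q_n$. Linear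 system (with parameter $m$), for the column $\Psi = (\lambda,\mu,\omega,\varphi,\chi)^T$: $$\Psi_x = \begin{pmatrix}0&-p&m\overline A_1 - H_\circ & -mq_nA_1 & mH_\circ\\ p&0&0&0&0\\ H_\circ&0&0&0&0\\ A_1&0&0&0&0\\ \overline A_1&0&0&0&0\end{pmatrix}\Psi,\qquad \Psi_y = \begin{pmatrix}0&q&0&0&0\\ -q&0&m\overline A_2 - K_\circ & -mq_nA_2 & mK_\circ\\ 0&K_\circ&0&0&0\\ 0&A_2&0&0&0\\ 0&\overline A_2&0&0&0\end{pmatrix}\Psi.$$ Bäcklund transformation: $\mathbf r' = \mathbf r - \frac{\varphi}{m\omega\nu}(\lambda\mathbf X + \mu\mathbf Y + \omega\mathbf N)$ (with $\omega,\nu\neq0$). Set $H = m\big(\nu H_\circ + \omega\overline A_1 - q_n\varphi A_1 + \tfrac{q_n\varphi^2}{2\omega}H_\circ\big)$, $K = m\big(\nu K_\circ + \omega\overline A_2 - q_n\varphi A_2 + \tfrac{q_n\varphi^2}{2\omega}K_\circ\big)$, and $A_1' = A_1 - \frac{H\varphi}{m\omega\nu}$, $A_2' = A_2 - \frac{K\varphi}{m\omega\nu}$, $H_\circ' = H_\circ - \frac{H}{m\nu}$, $K_\circ' = K_\circ - \frac{K}{m\nu}$. It is known (Rogers–Schief) that $\mathbf r'$ is again a membrane O surface in the curvature line coordinates $(x,y)$ whose first and third fundamental forms have coefficients $A_1',A_2'$ and $H_\circ',K_\circ'$, i.e. $\mathrm I' = A_1'^2dx^2 + A_2'^2dy^2$,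 $\mathrm{III}' = H_\circ'^2dx^2 + K_\circ'^2dy^2$. *)

From Coquelicot Require Import Coquelicot.
From Stdlib Require Import Reals List.
Open Scope R_scope.

Definition dx (f : R -> R -> R) : R -> R -> R := fun x y => Derive (fun s => f s y) x.
Definition dy (f : R -> R -> R) : R -> R -> R := fun x y => Derive (fun s => f x s) y.

Fixpoint iterD (w : list bool) (f : R -> R -> R) : R -> R -> R :=
  match w with
  | nil => f
  | true :: w' => dx (iterD w' f)
  | false :: w' => dy (iterD w' f)
  end.

Definition open2 (U : R -> R -> Prop) : Prop :=
  forall x y, U x y -> exists eps : posreal, forall x' y',
    Rabs (x' - x) < eps -> Rabs (y' - y) < eps -> U x' y'.

Definition smooth_on (U : R -> R -> Prop) (f : R -> R -> R) : Prop :=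
  forall (w : list bool) x y, U x y ->
    ex_derive (fun s => iterD w f s y) x /\
    ex_derive (fun s => iterD w f x s) y /\
    continuity_2d_pt (iterD w f) x y.

Definition cis (a : R) : Complex.C := (cos a, sin a).

Definition A1f (h al : R -> R -> R) : R -> R -> R := fun x y => cos (al x y) + h x y * sin (al x y).
Definition A2f (h al : R -> R -> R) : R -> R -> R := fun x y => sin (al x y) - h x y * cos (al x y).
Definition H0f (al xi : R -> R -> R) : R -> R -> R := fun x y => exp (xi x y) * sin (al x y).
Definition K0f (al xi : R -> R -> R) : R -> R -> R := fun x y => - exp (xi x y) * cos (al x y).

(* the system (**) at every point of U;
   (log sin al)_y is written as cot(al) al_y and (log cos al)_x as -tan(al) al_x *)
Definition OSystem (U : R -> R -> Prop) (h al xi : R -> R -> R) : Prop :=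
  forall x y, U x y ->
    dx h x y = (h x y + cos (al x y) / sin (al x y)) * dx xi x y /\
    dy h x y = (h x y - sin (al x y) / cos (al x y)) * dy xi x y /\
    dy (dx xi) x y = dx xi x y * dy xi x y
                     + (cos (al x y) / sin (al x y) * dy al x y) * dx xi x y
                     + (- (sin (al x y) / cos (al x y)) * dx al x y) * dy xi x y /\
    dx (fun u v => - dx al u v + dx xi u v * (cos (al u v) / sin (al u v))) x y
    + dy (fun u v => dy al u v + dy xi u v * (sin (al u v) / cos (al u v))) x y
    + exp (2 * xi x y) * sin (al x y) * cos (al x y) = 0.

Definition nuf (qn : R) (om ph chi : R -> R -> R) : R -> R -> R :=
  fun x y => chi x y - qn * (ph x y) ^ 2 / (2 * om x y).

Definition tf (h xi om ph : R -> R -> R) : R -> R -> R :=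
  fun x y => h x y - ph x y / om x y * exp (xi x y).

Definition hprime (h xi om ph xi' : R -> R -> R) : R -> R -> R :=
  fun x y => - tf h xi om ph x y + ph x y / om x y * exp (xi' x y).

From Coquelicot Require Import Coquelicot.
From Stdlib Require Import Reals List Lra Psatz.
Open Scope R_scope.

(* Everything reduces to pointwise identities. The linear system, the relations of the
   2nd kind and the system (**) express all first partials of lam, mu, om, ph, chi, and
   hence of t and nu, rationally in the data and the first partials of al and xi. Since
   (1 - i t) / (1 + i t) = e^{-2 i atan t}, the continuous angle al' coincides locally with
   al - 2 atan t up to a constant, and xi' is the logarithm of an explicit positive
   function, so the partials of al', xi' and h' are explicit as well. The new fundamental
   forms and the system (**) for (h', al', xi') then become rational identities, using
   sin^2 + cos^2 = 1, the old system (**) and, for the last equation only, the constraint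
   lam^2 + mu^2 + om^2 = 2 m om nu to eliminate nu. *)

Lemma smooth_on_ex_derive_x U f w x y :
  smooth_on U f -> U x y -> ex_derive (fun s => iterD w f s y) x.
Proof. intros Hf Hxy; exact (proj1 (Hf w x y Hxy)). Qed.

Lemma smooth_on_ex_derive_y U f w x y :
  smooth_on U f -> U x y -> ex_derive (fun s => iterD w f x s) y.
Proof. intros Hf Hxy; exact (proj1 (proj2 (Hf w x y Hxy))). Qed.

Lemma open2_locally_x U x y : open2 U -> U x y -> locally x (fun s => U s y).
Proof.
intros HU Hxy. destruct (HU x y Hxy) as [eps He]. exists eps. intros s Hs.
apply He; [exact Hs | rewrite Rminus_diag, Rabs_R0; apply cond_pos].
Qed.

Lemma open2_locally_y U x y : open2 U -> U x y -> locally y (fun s => U x s).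
Proof.
intros HU Hxy. destruct (HU x y Hxy) as [eps He]. exists eps. intros s Hs.
apply He; [rewrite Rminus_diag, Rabs_R0; apply cond_pos | exact Hs].
Qed.

Lemma dx_ext_on U f g x y : open2 U -> U x y ->
  (forall a b, U a b -> f a b = g a b) -> dx f x y = dx g x y.
Proof.
intros HU Hxy Hfg. apply Derive_ext_loc.
generalize (open2_locally_x U x y HU Hxy). apply filter_imp. intros s Hs. apply Hfg, Hs.
Qed.

Lemma dy_ext_on U f g x y : open2 U -> U x y ->
  (forall a b, U a b -> f a b = g a b) -> dy f x y = dy g x y.
Proof.
intros HU Hxy Hfg. apply Derive_ext_loc.
generalize (open2_locally_y U x y HU Hxy). apply filter_imp. intros s Hs. apply Hfg, Hs.
Qed.

Lemma continuity_2d_pt_continuous_x f x y :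
  continuity_2d_pt f x y -> continuous (fun s => f s y) x.
Proof.
intros Hf. apply filterlim_locally. intros eps. destruct (Hf eps) as [d Hd].
exists d. intros s Hs. apply Hd; [exact Hs | rewrite Rminus_diag, Rabs_R0; apply cond_pos].
Qed.

Lemma continuity_2d_pt_continuous_y f x y :
  continuity_2d_pt f x y -> continuous (fun s => f x s) y.
Proof.
intros Hf. apply filterlim_locally. intros eps. destruct (Hf eps) as [d Hd].
exists d. intros s Hs. apply Hd; [rewrite Rminus_diag, Rabs_R0; apply cond_pos | exact Hs].
Qed.

Lemma sin_eq_0_small d : Rabs d < PI -> sin d = 0 -> d = 0.
Proof.
intros Hd Hs. destruct (Rtotal_order d 0) as [Hn | [Hz | Hp]]; [| exact Hz |].
- rewrite Rabs_left in Hd by lra.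
  pose proof (sin_gt_0 (- d) ltac:(lra) ltac:(lra)) as Hpos. rewrite sin_neg in Hpos. lra.
- rewrite Rabs_right in Hd by lra. pose proof (sin_gt_0 d ltac:(lra) ltac:(lra)). lra.
Qed.

(* f - g takes values in 2 PI Z and is continuous at a, hence locally constant. *)
Lemma locally_angle_shift (f g : R -> R) (a : R) :
  continuous f a -> continuous g a ->
  locally a (fun s => cos (f s) = cos (g s) /\ sin (f s) = sin (g s)) ->
  locally a (fun s => f s = g s + (f a - g a)).
Proof.
intros Hf Hg Hcs.
assert (Hpi : 0 < PI / 2) by (pose proof PI_RGT_0; lra).
pose proof (proj1 (filterlim_locally _ _) Hf (mkposreal _ Hpi)) as Hf1.
pose proof (proj1 (filterlim_locally _ _) Hg (mkposreal _ Hpi)) as Hg1.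
destruct (locally_singleton _ _ Hcs) as [Ca Sa].
generalize (filter_and _ _ Hf1 (filter_and _ _ Hg1 Hcs)). apply filter_imp.
intros s (Hfs & Hgs & Cs & Ss).
change (Rabs (f s - f a) < PI / 2) in Hfs. change (Rabs (g s - g a) < PI / 2) in Hgs.
set (d := (f s - g s) - (f a - g a)).
assert (Hd : Rabs d < PI).
{ unfold d. replace ((f s - g s) - (f a - g a)) with ((f s - f a) + - (g s - g a)) by ring.
  eapply Rle_lt_trans; [apply Rabs_triang |]. rewrite Rabs_Ropp. lra. }
assert (Hsd : sin d = 0).
{ unfold d. rewrite sin_minus, !sin_minus, !cos_minus, Ca, Sa, Cs, Ss. ring. }
pose proof (sin_eq_0_small d Hd Hsd) as Hd0. unfold d in Hd0. lra.
Qed.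

Lemma is_derive_angle (f g : R -> R) (a l : R) :
  continuous f a -> is_derive g a l ->
  locally a (fun s => cos (f s) = cos (g s) /\ sin (f s) = sin (g s)) ->
  is_derive f a l.
Proof.
intros Hf Hg Hcs.
apply is_derive_ext_loc with (f := fun s => g s + (f a - g a)).
- assert (Hgc : continuous g a)
    by (apply (@ex_derive_continuous R_AbsRing R_NormedModule); exists l; exact Hg).
  generalize (locally_angle_shift f g a Hf Hgc Hcs). apply filter_imp.
  intros s Hs. now rewrite Hs.
- rewrite <- (Rplus_0_r l).
  apply (is_derive_plus g (fun _ => f a - g a));
    [exact Hg | exact (@is_derive_const R_AbsRing R_NormedModule _ a)].
Qed.

Lemma cos_pow2 x : cos x ^ 2 = 1 - sin x ^ 2.
Proof. pose proof (sin2_cos2 x). unfold Rsqr in H. lra. Qed.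

Lemma one_plus_pow2_neq0 t : 1 + t ^ 2 <> 0.
Proof. apply Rgt_not_eq, plus_Rsqr_gt_0. Qed.

Lemma cos_2atan t : cos (2 * atan t) = (1 - t ^ 2) / (1 + t ^ 2).
Proof.
rewrite cos_2a, cos_atan, sin_atan, Rsqr_pow2.
assert (Hs : 0 < sqrt (1 + t ^ 2)) by (apply sqrt_lt_R0; nra).
assert (Hs2 : sqrt (1 + t ^ 2) * sqrt (1 + t ^ 2) = 1 + t ^ 2) by (apply sqrt_sqrt; nra).
set (q := sqrt (1 + t ^ 2)) in *. rewrite <- Hs2. field. lra.
Qed.

Lemma sin_2atan t : sin (2 * atan t) = 2 * t / (1 + t ^ 2).
Proof.
rewrite sin_2a, cos_atan, sin_atan, Rsqr_pow2.
assert (Hs : 0 < sqrt (1 + t ^ 2)) by (apply sqrt_lt_R0; nra).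
assert (Hs2 : sqrt (1 + t ^ 2) * sqrt (1 + t ^ 2) = 1 + t ^ 2) by (apply sqrt_sqrt; nra).
set (q := sqrt (1 + t ^ 2)) in *. rewrite <- Hs2. field. lra.
Qed.

Lemma cos_sub_2atan a t :
  cos (a - 2 * atan t) = (cos a * (1 - t ^ 2) + 2 * t * sin a) / (1 + t ^ 2).
Proof.
rewrite cos_minus, cos_2atan, sin_2atan. field. apply one_plus_pow2_neq0.
Qed.

Lemma sin_sub_2atan a t :
  sin (a - 2 * atan t) = (sin a * (1 - t ^ 2) - 2 * t * cos a) / (1 + t ^ 2).
Proof.
rewrite sin_minus, cos_2atan, sin_2atan. field. apply one_plus_pow2_neq0.
Qed.

(* (1 - i t) / (1 + i t) = e^{-2 i atan t} *)
Lemma cis_mul_cayley a b t :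
  cis a = (cis b * ((1 - Ci * RtoC t) / (1 + Ci * RtoC t)))%C ->
  cos a = cos (b - 2 * atan t) /\ sin a = sin (b - 2 * atan t).
Proof.
intros H. pose proof (one_plus_pow2_neq0 t) as Ht.
pose proof (f_equal fst H) as Hc. pose proof (f_equal snd H) as Hs.
unfold cis, Cdiv, Cmult, Cinv, Cminus, Cplus, Copp, Ci, RtoC in Hc, Hs; simpl in Hc, Hs.
rewrite cos_sub_2atan, sin_sub_2atan.
split; [rewrite Hc | rewrite Hs]; field; nra.
Qed.

Ltac ex_derive_smooth :=
  repeat match goal with
  | |- _ /\ _ => split
  | |- True => exact I
  | H : smooth_on ?U _, Hu : ?U ?u ?v |- ex_derive _ ?u =>
      first [ exact (smooth_on_ex_derive_x _ _ nil _ _ H Hu)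
            | exact (smooth_on_ex_derive_x _ _ (true :: nil) _ _ H Hu)
            | exact (smooth_on_ex_derive_x _ _ (false :: nil) _ _ H Hu) ]
  | H : smooth_on ?U _, Hu : ?U ?u ?v |- ex_derive _ ?v =>
      first [ exact (smooth_on_ex_derive_y _ _ nil _ _ H Hu)
            | exact (smooth_on_ex_derive_y _ _ (true :: nil) _ _ H Hu)
            | exact (smooth_on_ex_derive_y _ _ (false :: nil) _ _ H Hu) ]
  | |- ex_derive _ _ => solve [eexists; eassumption]
  end.

Ltac nonzero :=
  repeat match goal with
  | |- _ /\ _ => split
  | |- _ * _ <> 0 => apply Rmult_integral_contrapositive_currified
  | |- / _ <> 0 => apply Rinv_neq_0_compat
  end;
  auto using exp_neq_0, one_plus_pow2_neq0; try lra.

Section BacklundTransformation.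

Variables (U : R -> R -> Prop) (qn m : R)
  (h al xi Ab1 Ab2 lam mu om ph chi : R -> R -> R).

Local Notation t := (tf h xi om ph).
Local Notation nu := (nuf qn om ph chi).

Hypotheses (HU : open2 U) (Hqn : qn <> 0) (Hm : m <> 0).
Hypotheses (Sh : smooth_on U h) (Sal : smooth_on U al) (Sxi : smooth_on U xi)
  (Slam : smooth_on U lam) (Smu : smooth_on U mu) (Som : smooth_on U om)
  (Sph : smooth_on U ph) (Schi : smooth_on U chi).
Hypothesis sin_cos_al_neq0 : forall x y, U x y -> sin (al x y) <> 0 /\ cos (al x y) <> 0.
Hypothesis A1_A2_neq0 : forall x y, U x y -> A1f h al x y <> 0 /\ A2f h al x y <> 0.
Hypothesis O_system : OSystem U h al xi.
Hypothesis second_kind : forall x y, U x y ->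
  2 * Ab1 x y * H0f al xi x y - qn * (A1f h al x y) ^ 2 = - qn /\
  2 * Ab2 x y * K0f al xi x y - qn * (A2f h al x y) ^ 2 = - qn.
Hypothesis linear_system :
  let A1 := A1f h al in let A2 := A2f h al in
  let H0 := H0f al xi in let K0 := K0f al xi in
  let p := fun x y => dy A1 x y / A2 x y in
  let q := fun x y => dx A2 x y / A1 x y in
  forall x y, U x y ->
    dx lam x y = - p x y * mu x y + (m * Ab1 x y - H0 x y) * om x y
                 - m * qn * A1 x y * ph x y + m * H0 x y * chi x y /\
    dx mu x y = p x y * lam x y /\
    dx om x y = H0 x y * lam x y /\
    dx ph x y = A1 x y * lam x y /\
    dx chi x y = Ab1 x y * lam x y /\
    dy lam x y = q x y * mu x y /\
    dy mu x y = - q x y * lam x y + (m * Ab2 x y - K0 x y) * om x y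
                - m * qn * A2 x y * ph x y + m * K0 x y * chi x y /\
    dy om x y = K0 x y * mu x y /\
    dy ph x y = A2 x y * mu x y /\
    dy chi x y = Ab2 x y * mu x y.
Hypothesis om_nu_neq0 : forall x y, U x y -> om x y <> 0 /\ nu x y <> 0.
Hypothesis constraint : forall x y, U x y ->
  lam x y ^ 2 + mu x y ^ 2 + om x y ^ 2 = 2 * m * om x y * nu x y.

Lemma Ab1_second_kind u v : U u v ->
  Ab1 u v = qn * ((cos (al u v) + h u v * sin (al u v)) ^ 2 - 1)
            / (2 * (exp (xi u v) * sin (al u v))).
Proof.
intros Hu. destruct (second_kind u v Hu) as [K _]. destruct (sin_cos_al_neq0 u v Hu) as [Hs _].
unfold H0f, A1f in K. field_simplify_eq; [lra | nonzero].
Qed.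

Lemma Ab2_second_kind u v : U u v ->
  Ab2 u v = qn * ((sin (al u v) - h u v * cos (al u v)) ^ 2 - 1)
            / (2 * (- exp (xi u v) * cos (al u v))).
Proof.
intros Hu. destruct (second_kind u v Hu) as [_ K]. destruct (sin_cos_al_neq0 u v Hu) as [_ Hc].
unfold K0f, A2f in K. field_simplify_eq; [lra | nonzero].
Qed.

Lemma dy_A1_div_A2 u v : U u v ->
  dy (A1f h al) u v / A2f h al u v = - dy xi u v * sin (al u v) / cos (al u v) - dy al u v.
Proof.
intros Hu. destruct (sin_cos_al_neq0 u v Hu) as [Hs Hc].
destruct (A1_A2_neq0 u v Hu) as [_ HA2]. destruct (O_system u v Hu) as (_ & Dh & _).
assert (DA1 : dy (A1f h al) u v = - sin (al u v) * dy al u v + dy h u v * sin (al u v)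
                                  + h u v * (cos (al u v) * dy al u v)).
{ unfold dy, A1f. apply is_derive_unique. auto_derive; [ex_derive_smooth | ring]. }
rewrite DA1, Dh. unfold A2f in HA2 |- *. field. nonzero.
Qed.

Lemma dx_A2_div_A1 u v : U u v ->
  dx (A2f h al) u v / A1f h al u v = dx al u v - dx xi u v * cos (al u v) / sin (al u v).
Proof.
intros Hu. destruct (sin_cos_al_neq0 u v Hu) as [Hs Hc].
destruct (A1_A2_neq0 u v Hu) as [HA1 _]. destruct (O_system u v Hu) as (Dh & _).
assert (DA2 : dx (A2f h al) u v = cos (al u v) * dx al u v
                                  - (dx h u v * cos (al u v) - h u v * (sin (al u v) * dx al u v))).
{ unfold dx, A2f. apply is_derive_unique. auto_derive; [ex_derive_smooth | ring]. }
rewrite DA2, Dh. unfold A1f in HA1 |- *. field. nonzero.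
Qed.

Definition lam_x u v :=
  m * (om u v * qn * (2 * t u v * cos (al u v) + t u v ^ 2 * sin (al u v) - sin (al u v))
         / (2 * exp (xi u v))
       + exp (xi u v) * sin (al u v) * nu u v)
  - exp (xi u v) * sin (al u v) * om u v
  + (dy xi u v * sin (al u v) / cos (al u v) + dy al u v) * mu u v.

Definition mu_y u v :=
  m * (om u v * qn * (cos (al u v) + 2 * t u v * sin (al u v) - t u v ^ 2 * cos (al u v))
         / (2 * exp (xi u v))
       - exp (xi u v) * cos (al u v) * nu u v)
  + exp (xi u v) * cos (al u v) * om u v
  - (dx al u v - dx xi u v * cos (al u v) / sin (al u v)) * lam u v.

Lemma dx_Psi u v : U u v ->
  dx om u v = exp (xi u v) * sin (al u v) * lam u v /\
  dx ph u v = (cos (al u v) + h u v * sin (al u v)) * lam u v /\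
  dx chi u v = qn * ((cos (al u v) + h u v * sin (al u v)) ^ 2 - 1)
               / (2 * (exp (xi u v) * sin (al u v))) * lam u v /\
  dx lam u v = lam_x u v /\
  dx mu u v = (- dy xi u v * sin (al u v) / cos (al u v) - dy al u v) * lam u v.
Proof.
intros Hu. destruct (sin_cos_al_neq0 u v Hu) as [Hs Hc]. destruct (om_nu_neq0 u v Hu) as [Hom _].
destruct (linear_system u v Hu) as (Lx & Mx & Ox & Px & Cx & _).
rewrite Lx, Mx, Ox, Px, Cx. cbv beta.
rewrite dy_A1_div_A2, Ab1_second_kind by exact Hu.
unfold lam_x, H0f, A1f, tf, nuf.
pose proof (cos_pow2 (al u v)) as Hcos2.
repeat split; field [Hcos2]; nonzero.
Qed.

Lemma dy_Psi u v : U u v ->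
  dy om u v = - exp (xi u v) * cos (al u v) * mu u v /\
  dy ph u v = (sin (al u v) - h u v * cos (al u v)) * mu u v /\
  dy chi u v = qn * ((sin (al u v) - h u v * cos (al u v)) ^ 2 - 1)
               / (2 * (- exp (xi u v) * cos (al u v))) * mu u v /\
  dy lam u v = (dx al u v - dx xi u v * cos (al u v) / sin (al u v)) * mu u v /\
  dy mu u v = mu_y u v.
Proof.
intros Hu. destruct (sin_cos_al_neq0 u v Hu) as [Hs Hc]. destruct (om_nu_neq0 u v Hu) as [Hom _].
destruct (linear_system u v Hu) as (_ & _ & _ & _ & _ & Ly & My & Oy & Py & Cy).
rewrite Ly, My, Oy, Py, Cy. cbv beta.
rewrite dx_A2_div_A1, Ab2_second_kind by exact Hu.
unfold mu_y, K0f, A2f, tf, nuf.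
pose proof (cos_pow2 (al u v)) as Hcos2.
repeat split; field [Hcos2]; nonzero.
Qed.

Definition t_x u v :=
  (t u v + cos (al u v) / sin (al u v)) * dx xi u v
  - lam u v * exp (xi u v) * (cos (al u v) + t u v * sin (al u v)) / om u v.

Definition t_y u v :=
  (t u v - sin (al u v) / cos (al u v)) * dy xi u v
  - mu u v * exp (xi u v) * (sin (al u v) - t u v * cos (al u v)) / om u v.

Definition nu_x u v :=
  qn * lam u v * (2 * t u v * cos (al u v) + t u v ^ 2 * sin (al u v) - sin (al u v))
  / (2 * exp (xi u v)).

Definition nu_y u v :=
  qn * mu u v * (cos (al u v) + 2 * t u v * sin (al u v) - t u v ^ 2 * cos (al u v))
  / (2 * exp (xi u v)).

Lemma is_derive_t u v : U u v ->
  is_derive (fun s : R => t s v) u (t_x u v) /\ is_derive (fun s : R => t u s) v (t_y u v).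
Proof.
intros Hu. destruct (sin_cos_al_neq0 u v Hu) as [Hs Hc]. destruct (om_nu_neq0 u v Hu) as [Hom _].
destruct (O_system u v Hu) as (Dhx & Dhy & _).
destruct (dx_Psi u v Hu) as (Dox & Dpx & _). destruct (dy_Psi u v Hu) as (Doy & Dpy & _).
unfold dx, dy in Dhx, Dhy, Dox, Dpx, Doy, Dpy.
unfold t_x, t_y, tf, dx, dy.
split; (auto_derive; [ex_derive_smooth; nonzero |]);
  rewrite ?Dhx, ?Dhy, ?Dox, ?Doy, ?Dpx, ?Dpy; field; nonzero.
Qed.

Lemma is_derive_nu u v : U u v ->
  is_derive (fun s : R => nu s v) u (nu_x u v) /\ is_derive (fun s : R => nu u s) v (nu_y u v).
Proof.
intros Hu. destruct (sin_cos_al_neq0 u v Hu) as [Hs Hc]. destruct (om_nu_neq0 u v Hu) as [Hom _].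
destruct (dx_Psi u v Hu) as (Dox & Dpx & Dcx & _).
destruct (dy_Psi u v Hu) as (Doy & Dpy & Dcy & _).
unfold dx, dy in Dox, Dpx, Dcx, Doy, Dpy, Dcy.
pose proof (cos_pow2 (al u v)) as Hcos2.
unfold nu_x, nu_y, nuf, tf.
split; (auto_derive; [ex_derive_smooth; nonzero |]);
  rewrite ?Dox, ?Doy, ?Dpx, ?Dpy, ?Dcx, ?Dcy; field [Hcos2]; nonzero.
Qed.

Lemma h_from_t u v : U u v -> h u v = t u v + ph u v / om u v * exp (xi u v).
Proof. intros Hu. destruct (om_nu_neq0 u v Hu) as [Hom _]. unfold tf. field. exact Hom. Qed.

Variables xi' al' : R -> R -> R.

Hypothesis exp_xi' : forall x y, U x y ->
  exp (xi' x y) = qn / 2 * (om x y / nu x y) * exp (- xi x y) * (1 + t x y ^ 2).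
Hypothesis cis_al' : forall x y, U x y ->
  cis (al' x y) = (cis (al x y) * ((1 - Ci * RtoC (t x y)) / (1 + Ci * RtoC (t x y))))%C.
Hypothesis al'_continuous : forall x y, U x y -> continuity_2d_pt al' x y.

Definition cos_al'_expr u v :=
  (cos (al u v) * (1 - t u v ^ 2) + 2 * t u v * sin (al u v)) / (1 + t u v ^ 2).

Definition sin_al'_expr u v :=
  (sin (al u v) * (1 - t u v ^ 2) - 2 * t u v * cos (al u v)) / (1 + t u v ^ 2).

Lemma cos_sin_al' u v : U u v ->
  cos (al' u v) = cos_al'_expr u v /\ sin (al' u v) = sin_al'_expr u v.
Proof.
intros Hu. destruct (cis_mul_cayley _ _ _ (cis_al' u v Hu)) as [Hc Hs].
now rewrite Hc, Hs, cos_sub_2atan, sin_sub_2atan.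
Qed.

Definition xi'_x u v :=
  exp (xi u v) * sin (al u v) * lam u v / om u v - nu_x u v / nu u v - dx xi u v
  + 2 * t u v * t_x u v / (1 + t u v ^ 2).

Definition xi'_y u v :=
  - exp (xi u v) * cos (al u v) * mu u v / om u v - nu_y u v / nu u v - dy xi u v
  + 2 * t u v * t_y u v / (1 + t u v ^ 2).

Definition al'_x u v := dx al u v - 2 * t_x u v / (1 + t u v ^ 2).

Definition al'_y u v := dy al u v - 2 * t_y u v / (1 + t u v ^ 2).

Lemma xi'_ln u v : U u v ->
  xi' u v = ln (qn / 2 * (om u v / nu u v) * exp (- xi u v) * (1 + t u v ^ 2)).
Proof. intros Hu. now rewrite <- exp_xi', ln_exp. Qed.

Lemma is_derive_xi' u v : U u v ->
  is_derive (fun s : R => xi' s v) u (xi'_x u v) /\ is_derive (fun s : R => xi' u s) v (xi'_y u v).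
Proof.
intros Hu. destruct (sin_cos_al_neq0 u v Hu) as [Hs Hc]. destruct (om_nu_neq0 u v Hu) as [Hom Hnu].
destruct (is_derive_t u v Hu) as [Tx Ty]. destruct (is_derive_nu u v Hu) as [Nx Ny].
destruct (dx_Psi u v Hu) as (Dox & _). destruct (dy_Psi u v Hu) as (Doy & _).
unfold dx, dy in Dox, Doy.
pose proof (one_plus_pow2_neq0 (t u v)) as Ht.
assert (Hpos : 0 < qn / 2 * (om u v / nu u v) * exp (- xi u v) * (1 + t u v ^ 2))
  by (rewrite <- exp_xi' by exact Hu; apply exp_pos).
split.
- apply is_derive_ext_loc
    with (f := fun s => ln (qn / 2 * (om s v / nu s v) * exp (- xi s v) * (1 + t s v ^ 2))).
  { generalize (open2_locally_x U u v HU Hu). apply filter_imp.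
    intros s Hs'. symmetry. apply xi'_ln, Hs'. }
  auto_derive; [ex_derive_smooth; nonzero |].
  rewrite (is_derive_unique _ _ _ Tx), (is_derive_unique _ _ _ Nx), Dox.
  unfold xi'_x, dx. field. nonzero.
- apply is_derive_ext_loc
    with (f := fun s => ln (qn / 2 * (om u s / nu u s) * exp (- xi u s) * (1 + t u s ^ 2))).
  { generalize (open2_locally_y U u v HU Hu). apply filter_imp.
    intros s Hs'. symmetry. apply xi'_ln, Hs'. }
  auto_derive; [ex_derive_smooth; nonzero |].
  rewrite (is_derive_unique _ _ _ Ty), (is_derive_unique _ _ _ Ny), Doy.
  unfold xi'_y, dy. field. nonzero.
Qed.

Lemma is_derive_al' u v : U u v ->
  is_derive (fun s : R => al' s v) u (al'_x u v) /\ is_derive (fun s : R => al' u s) v (al'_y u v).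
Proof.
intros Hu. destruct (is_derive_t u v Hu) as [Tx Ty].
pose proof (one_plus_pow2_neq0 (t u v)) as Ht.
assert (Hcs : forall a b, U a b ->
  cos (al' a b) = cos (al a b - 2 * atan (t a b)) /\
  sin (al' a b) = sin (al a b - 2 * atan (t a b)))
  by (intros a b Hab; exact (cis_mul_cayley _ _ _ (cis_al' a b Hab))).
split.
- apply (is_derive_angle _ (fun s => al s v - 2 * atan (t s v))).
  + exact (continuity_2d_pt_continuous_x _ _ _ (al'_continuous u v Hu)).
  + auto_derive; [ex_derive_smooth |].
    rewrite (is_derive_unique _ _ _ Tx). unfold al'_x, dx. field. exact Ht.
  + generalize (open2_locally_x U u v HU Hu). apply filter_imp. intros s Hs. exact (Hcs s v Hs).
- apply (is_derive_angle _ (fun s => al u s - 2 * atan (t u s))).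
  + exact (continuity_2d_pt_continuous_y _ _ _ (al'_continuous u v Hu)).
  + auto_derive; [ex_derive_smooth |].
    rewrite (is_derive_unique _ _ _ Ty). unfold al'_y, dy. field. exact Ht.
  + generalize (open2_locally_y U u v HU Hu). apply filter_imp. intros s Hs. exact (Hcs u s Hs).
Qed.

Lemma partials_xi'_al' u v : U u v ->
  dx xi' u v = xi'_x u v /\ dy xi' u v = xi'_y u v /\
  dx al' u v = al'_x u v /\ dy al' u v = al'_y u v.
Proof.
intros Hu. destruct (is_derive_xi' u v Hu) as [Xx Xy]. destruct (is_derive_al' u v Hu) as [Ax Ay].
repeat split; apply is_derive_unique; assumption.
Qed.

Lemma transformed_fundamental_forms :
  let A1 := A1f h al in let A2 := A2f h al in
  let H0 := H0f al xi in let K0 := K0f al xi in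
  let HH := fun x y => m * (nu x y * H0 x y + om x y * Ab1 x y - qn * ph x y * A1 x y
                            + qn * (ph x y) ^ 2 / (2 * om x y) * H0 x y) in
  let KK := fun x y => m * (nu x y * K0 x y + om x y * Ab2 x y - qn * ph x y * A2 x y
                            + qn * (ph x y) ^ 2 / (2 * om x y) * K0 x y) in
  let A1' := fun x y => A1 x y - HH x y * ph x y / (m * om x y * nu x y) in
  let A2' := fun x y => A2 x y - KK x y * ph x y / (m * om x y * nu x y) in
  let H0' := fun x y => H0 x y - HH x y / (m * nu x y) in
  let K0' := fun x y => K0 x y - KK x y / (m * nu x y) in
  let h' := hprime h xi om ph xi' in
  forall x y, U x y ->
    A1' x y = cos (al' x y) + h' x y * sin (al' x y) /\
    A2' x y = sin (al' x y) - h' x y * cos (al' x y) /\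
    H0' x y = exp (xi' x y) * sin (al' x y) /\
    K0' x y = - exp (xi' x y) * cos (al' x y).
Proof.
cbv zeta. intros u v Hu.
destruct (sin_cos_al_neq0 u v Hu) as [Hs Hc]. destruct (om_nu_neq0 u v Hu) as [Hom Hnu].
destruct (cos_sin_al' u v Hu) as [Ca Sa].
pose proof (one_plus_pow2_neq0 (t u v)) as Ht. pose proof (cos_pow2 (al u v)) as Hcos2.
pose proof (h_from_t u v Hu) as Hh.
unfold hprime. rewrite Ca, Sa, exp_xi', Ab1_second_kind, Ab2_second_kind by exact Hu.
unfold cos_al'_expr, sin_al'_expr, A1f, A2f, H0f, K0f. rewrite exp_Ropp, Hh.
repeat split; field [Hcos2]; nonzero.
Qed.

Lemma al'_numerators_neq0 u v : U u v -> sin (al' u v) <> 0 -> cos (al' u v) <> 0 ->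
  sin (al u v) * (1 - t u v ^ 2) - 2 * t u v * cos (al u v) <> 0 /\
  cos (al u v) * (1 - t u v ^ 2) + 2 * t u v * sin (al u v) <> 0.
Proof.
intros Hu Hs' Hc'. destruct (cos_sin_al' u v Hu) as [Ca Sa].
rewrite Sa in Hs'. rewrite Ca in Hc'. unfold sin_al'_expr, cos_al'_expr in *.
split; intros Z; [apply Hs' | apply Hc']; rewrite Z; unfold Rdiv; ring.
Qed.

Lemma OSystem_h' u v : U u v -> sin (al' u v) <> 0 -> cos (al' u v) <> 0 ->
  dx (hprime h xi om ph xi') u v
    = (hprime h xi om ph xi' u v + cos (al' u v) / sin (al' u v)) * dx xi' u v /\
  dy (hprime h xi om ph xi') u v
    = (hprime h xi om ph xi' u v - sin (al' u v) / cos (al' u v)) * dy xi' u v.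
Proof.
intros Hu Hs' Hc'. destruct (al'_numerators_neq0 u v Hu Hs' Hc') as [HSn HCn].
destruct (sin_cos_al_neq0 u v Hu) as [Hs Hc]. destruct (om_nu_neq0 u v Hu) as [Hom Hnu].
destruct (is_derive_t u v Hu) as [Tx Ty]. destruct (is_derive_xi' u v Hu) as [Xx Xy].
destruct (dx_Psi u v Hu) as (Dox & Dpx & _). destruct (dy_Psi u v Hu) as (Doy & Dpy & _).
destruct (partials_xi'_al' u v Hu) as (DXx & DXy & _).
destruct (cos_sin_al' u v Hu) as [Ca Sa].
pose proof (one_plus_pow2_neq0 (t u v)) as Ht. pose proof (cos_pow2 (al u v)) as Hcos2.
pose proof (h_from_t u v Hu) as Hh.
unfold dx, dy in Dox, Dpx, Doy, Dpy, DXx, DXy.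
unfold hprime, dx, dy. split.
- apply is_derive_unique. auto_derive; [ex_derive_smooth; nonzero |].
  rewrite (is_derive_unique _ _ _ Tx), DXx, Dpx, Dox, exp_xi', Ca, Sa by exact Hu.
  unfold xi'_x, t_x, nu_x, cos_al'_expr, sin_al'_expr, dx. rewrite Hh, exp_Ropp.
  field [Hcos2]. nonzero.
- apply is_derive_unique. auto_derive; [ex_derive_smooth; nonzero |].
  rewrite (is_derive_unique _ _ _ Ty), DXy, Dpy, Doy, exp_xi', Ca, Sa by exact Hu.
  unfold xi'_y, t_y, nu_y, cos_al'_expr, sin_al'_expr, dy. rewrite Hh, exp_Ropp.
  field [Hcos2]. nonzero.
Qed.

Lemma OSystem_xi' u v : U u v -> sin (al' u v) <> 0 -> cos (al' u v) <> 0 ->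
  dy (dx xi') u v = dx xi' u v * dy xi' u v
                    + (cos (al' u v) / sin (al' u v) * dy al' u v) * dx xi' u v
                    + (- (sin (al' u v) / cos (al' u v)) * dx al' u v) * dy xi' u v.
Proof.
intros Hu Hs' Hc'.
rewrite (dy_ext_on U _ _ u v HU Hu (fun a b Hab => proj1 (partials_xi'_al' a b Hab))).
destruct (partials_xi'_al' u v Hu) as (DXx & DXy & DAx & DAy). rewrite DXx, DXy, DAx, DAy.
destruct (cos_sin_al' u v Hu) as [Ca Sa]. rewrite Ca, Sa.
destruct (al'_numerators_neq0 u v Hu Hs' Hc') as [HSn HCn].
destruct (sin_cos_al_neq0 u v Hu) as [Hs Hc]. destruct (om_nu_neq0 u v Hu) as [Hom Hnu].
destruct (is_derive_t u v Hu) as [_ Ty]. destruct (is_derive_nu u v Hu) as [_ Ny].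
destruct (dy_Psi u v Hu) as (Doy & _ & _ & Dly & _).
destruct (O_system u v Hu) as (_ & _ & Dxiy & _).
pose proof (one_plus_pow2_neq0 (t u v)) as Ht. pose proof (cos_pow2 (al u v)) as Hcos2.
unfold dy in Doy, Dly, Dxiy.
unfold dy at 1, xi'_x, t_x, nu_x. apply is_derive_unique.
auto_derive; [ex_derive_smooth; nonzero |].
rewrite Dxiy, (is_derive_unique _ _ _ Ty), (is_derive_unique _ _ _ Ny), Dly, Doy.
unfold xi'_x, xi'_y, al'_x, al'_y, t_x, t_y, nu_x, nu_y, cos_al'_expr, sin_al'_expr, dx, dy.
field [Hcos2]. nonzero.
Qed.

Lemma al'_fluxes u v : U u v ->
  - dx al' u v + dx xi' u v * (cos (al' u v) / sin (al' u v))
    = - al'_x u v + xi'_x u v * (cos_al'_expr u v / sin_al'_expr u v) /\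
  dy al' u v + dy xi' u v * (sin (al' u v) / cos (al' u v))
    = al'_y u v + xi'_y u v * (sin_al'_expr u v / cos_al'_expr u v).
Proof.
intros Hu. destruct (partials_xi'_al' u v Hu) as (DXx & DXy & DAx & DAy).
destruct (cos_sin_al' u v Hu) as [Ca Sa]. now rewrite DXx, DXy, DAx, DAy, Ca, Sa.
Qed.

Lemma nu_from_constraint u v : U u v ->
  lam u v ^ 2 + mu u v ^ 2 + om u v ^ 2 <> 0 /\
  nu u v = (lam u v ^ 2 + mu u v ^ 2 + om u v ^ 2) / (2 * m * om u v).
Proof.
intros Hu. destruct (om_nu_neq0 u v Hu) as [Hom Hnu].
rewrite constraint by exact Hu. split; [nonzero | field; nonzero].
Qed.

Lemma OSystem_al' u v : U u v -> sin (al' u v) <> 0 -> cos (al' u v) <> 0 ->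
  dx (fun u v => - dx al' u v + dx xi' u v * (cos (al' u v) / sin (al' u v))) u v
  + dy (fun u v => dy al' u v + dy xi' u v * (sin (al' u v) / cos (al' u v))) u v
  + exp (2 * xi' u v) * sin (al' u v) * cos (al' u v) = 0.
Proof.
intros Hu Hs' Hc'.
rewrite (dx_ext_on U _ _ u v HU Hu (fun a b Hab => proj1 (al'_fluxes a b Hab))),
  (dy_ext_on U _ _ u v HU Hu (fun a b Hab => proj2 (al'_fluxes a b Hab))).
destruct (cos_sin_al' u v Hu) as [Ca Sa].
replace (2 * xi' u v) with (xi' u v + xi' u v) by ring.
rewrite exp_plus, exp_xi', Ca, Sa by exact Hu.
destruct (al'_numerators_neq0 u v Hu Hs' Hc') as [HSn HCn].
destruct (sin_cos_al_neq0 u v Hu) as [Hs Hc]. destruct (om_nu_neq0 u v Hu) as [Hom Hnu].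
destruct (is_derive_t u v Hu) as [Tx Ty]. destruct (is_derive_nu u v Hu) as [Nx Ny].
destruct (dx_Psi u v Hu) as (Dox & _ & _ & Dlx & _).
destruct (dy_Psi u v Hu) as (Doy & _ & _ & _ & Dmy).
destruct (nu_from_constraint u v Hu) as [Hsum Hnu_eq].
destruct (O_system u v Hu) as (_ & _ & _ & Dal).
pose proof (one_plus_pow2_neq0 (t u v)) as Ht. pose proof (cos_pow2 (al u v)) as Hcos2.
unfold dx, dy in Dox, Doy, Dlx, Dmy.
unfold dx at 1, dy at 1 in Dal. unfold dx at 1, dy at 1. cbv beta in Dal |- *.
(* compare with the left-hand side of the old equation, which vanishes *)
match type of Dal with ?L = 0 => transitivity L; [| exact Dal] end.
unfold al'_x, al'_y, xi'_x, xi'_y, t_x, t_y, nu_x, nu_y, cos_al'_expr, sin_al'_expr.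
match goal with |- Derive ?f u + Derive ?g v + _ = Derive ?f0 u + Derive ?g0 v + _ =>
  eassert (DX : is_derive f u _) by (auto_derive; [ex_derive_smooth; nonzero | reflexivity]);
  eassert (DY : is_derive g v _) by (auto_derive; [ex_derive_smooth; nonzero | reflexivity]);
  eassert (DX0 : is_derive f0 u _) by (auto_derive; [ex_derive_smooth; nonzero | reflexivity]);
  eassert (DY0 : is_derive g0 v _) by (auto_derive; [ex_derive_smooth; nonzero | reflexivity])
end.
rewrite (is_derive_unique _ _ _ DX), (is_derive_unique _ _ _ DY),
  (is_derive_unique _ _ _ DX0), (is_derive_unique _ _ _ DY0).
rewrite (is_derive_unique _ _ _ Tx), (is_derive_unique _ _ _ Ty),
  (is_derive_unique _ _ _ Nx), (is_derive_unique _ _ _ Ny), Dlx, Dmy, Dox, Doy.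
replace (2 * xi u v) with (xi u v + xi u v) by ring. rewrite exp_plus, exp_Ropp.
unfold t_x, t_y, nu_x, nu_y, lam_x, mu_y, dx, dy.
rewrite Hnu_eq. field [Hcos2]. nonzero.
Qed.

Lemma OSystem_transformed :
  OSystem (fun x y => U x y /\ sin (al' x y) <> 0 /\ cos (al' x y) <> 0)
          (hprime h xi om ph xi') al' xi'.
Proof.
intros x y (Hxy & Hs' & Hc').
destruct (OSystem_h' x y Hxy Hs' Hc') as [Ex Ey].
exact (conj Ex (conj Ey (conj (OSystem_xi' x y Hxy Hs' Hc') (OSystem_al' x y Hxy Hs' Hc')))).
Qed.

End BacklundTransformation.

Theorem mainTheorem4
  (U : R -> R -> Prop) (qn m : R)
  (h al xi Ab1 Ab2 lam mu om ph chi xi' al' : R -> R -> R) :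
  open2 U ->
  qn <> 0 -> m <> 0 ->
  smooth_on U h -> smooth_on U al -> smooth_on U xi ->
  smooth_on U lam -> smooth_on U mu -> smooth_on U om ->
  smooth_on U ph -> smooth_on U chi ->
  (forall x y, U x y -> sin (al x y) <> 0 /\ cos (al x y) <> 0) ->
  (forall x y, U x y -> A1f h al x y <> 0 /\ A2f h al x y <> 0) ->
  (* (h, alpha, xi) solves (**) *)
  OSystem U h al xi ->
  (* 2nd kind: Abar_1, Abar_2 determined by the algebraic relations *)
  (forall x y, U x y ->
     2 * Ab1 x y * H0f al xi x y - qn * (A1f h al x y) ^ 2 = - qn /\
     2 * Ab2 x y * K0f al xi x y - qn * (A2f h al x y) ^ 2 = - qn) ->
  (* the linear system, with p = (A1)_y / A2 and q = (A2)_x / A1 *)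
  (let A1 := A1f h al in let A2 := A2f h al in
   let H0 := H0f al xi in let K0 := K0f al xi in
   let p := fun x y => dy A1 x y / A2 x y in
   let q := fun x y => dx A2 x y / A1 x y in
   forall x y, U x y ->
     dx lam x y = - p x y * mu x y + (m * Ab1 x y - H0 x y) * om x y
                  - m * qn * A1 x y * ph x y + m * H0 x y * chi x y /\
     dx mu x y = p x y * lam x y /\
     dx om x y = H0 x y * lam x y /\
     dx ph x y = A1 x y * lam x y /\
     dx chi x y = Ab1 x y * lam x y /\
     dy lam x y = q x y * mu x y /\
     dy mu x y = - q x y * lam x y + (m * Ab2 x y - K0 x y) * om x y
                 - m * qn * A2 x y * ph x y + m * K0 x y * chi x y /\
     dy om x y = K0 x y * mu x y /\
     dy ph x y = A2 x y * mu x y /\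
     dy chi x y = Ab2 x y * mu x y) ->
  (forall x y, U x y -> om x y <> 0 /\ nuf qn om ph chi x y <> 0) ->
  (* the constraint *)
  (forall x y, U x y ->
     (lam x y) ^ 2 + (mu x y) ^ 2 + (om x y) ^ 2 = 2 * m * om x y * nuf qn om ph chi x y) ->
  (* definition of xi' and alpha' (alpha' a continuous choice of the angle) *)
  (forall x y, U x y ->
     exp (xi' x y) = qn / 2 * (om x y / nuf qn om ph chi x y) * exp (- xi x y)
                     * (1 + (tf h xi om ph x y) ^ 2)) ->
  (forall x y, U x y ->
     cis (al' x y) = (cis (al x y) * ((1 - Ci * RtoC (tf h xi om ph x y))
                                      / (1 + Ci * RtoC (tf h xi om ph x y))))%C) ->
  (forall x y, U x y -> continuity_2d_pt al' x y) ->
  let A1 := A1f h al in let A2 := A2f h al in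
  let H0 := H0f al xi in let K0 := K0f al xi in
  let nu := nuf qn om ph chi in
  let HH := fun x y => m * (nu x y * H0 x y + om x y * Ab1 x y - qn * ph x y * A1 x y
                            + qn * (ph x y) ^ 2 / (2 * om x y) * H0 x y) in
  let KK := fun x y => m * (nu x y * K0 x y + om x y * Ab2 x y - qn * ph x y * A2 x y
                            + qn * (ph x y) ^ 2 / (2 * om x y) * K0 x y) in
  let A1' := fun x y => A1 x y - HH x y * ph x y / (m * om x y * nu x y) in
  let A2' := fun x y => A2 x y - KK x y * ph x y / (m * om x y * nu x y) in
  let H0' := fun x y => H0 x y - HH x y / (m * nu x y) in
  let K0' := fun x y => K0 x y - KK x y / (m * nu x y) in
  let h' := hprime h xi om ph xi' in
  (forall x y, U x y ->
     A1' x y = cos (al' x y) + h' x y * sin (al' x y) /\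
     A2' x y = sin (al' x y) - h' x y * cos (al' x y) /\
     H0' x y = exp (xi' x y) * sin (al' x y) /\
     K0' x y = - exp (xi' x y) * cos (al' x y)) /\
  OSystem (fun x y => U x y /\ sin (al' x y) <> 0 /\ cos (al' x y) <> 0) h' al' xi'.
Proof.
intros HU Hqn Hm Sh Sal Sxi Slam Smu Som Sph Schi Hal HA HO Hkind Hlin Hnz Hcon Hxi' Hal' Hcont.
cbv zeta. split.
- exact (transformed_fundamental_forms U qn m h al xi Ab1 Ab2 om ph chi
           Hm Hal Hkind Hnz xi' al' Hxi' Hal').
- exact (OSystem_transformed U qn m h al xi Ab1 Ab2 lam mu om ph chi
           HU Hqn Hm Sh Sal Sxi Slam Smu Som Sph Schi Hal HA HO Hkind Hlin Hnz Hcon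
           xi' al' Hxi' Hal' Hcont).
Qed.
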